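(* Let $s\geq 2$ be an integer and let $T$ be a tree with $n$ vertices in which every vertex has degree at most $s$. Let $\mathcal{W}$ denote the Wiener index of $T$, and let $\mathcal{V}_{1,s}$ be the tree obtained from $T$ by one application of the Vicsek fractal operation $V_s$. Then the Wiener index of $\mathcal{V}_{1,s}$ is $$\mathcal{W}_{\mathcal{V}_{1,s}}=3(s+1)^{2}\mathcal{W}+(s^{2}-s-2)n^{2}+(s+2)n.$$
   Context: All graphs are simple and connected. The distance $d_{uv}$ between vertices $u,v$ is the number of edges of a shortest path joining them. The Wiener index of a graph $G=(V,E)$ is $\mathcal{W}=\sum_{\{u,v\},\,u\neq v} d_{uv}=\frac12\sum_{u\in V}\sum_{v\in V}d_{uv}$ (sum over unordered pairs of distinct vertices). The Vicsek fractal operation $V_s$ applied to a tree $T$ whose maximum degree is at most $s$ produces a new tree as follows: first, every edge $uv$ of $T$ is replaced by a path $u-a-b-v$ of length $3$ through two new vertices $a,b$ (distinct for each edge); then, to every original vertex $v$ of $T$, having degree $k_v$ in $T$, one attaches $s-k_v$ new pendant vertices (leaves), so that every original vertex has degree exactly $s$. The inserted vertices $a,b$ receive no further pendant vertices. *)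

From mathcomp Require Import all_boot.
Set Implicit Arguments. Unset Strict Implicit. Unset Printing Implicit Defensive.

Section Graphs.
Variables (V : finType) (e : rel V).

Definition simple_graph := symmetric e /\ irreflexive e.

Definition connected_graph := forall u v : V, connect e u v.

Definition acyclic := forall p : seq V, ucycle e p -> size p < 3.

Definition is_tree := [/\ simple_graph, connected_graph & acyclic].

Definition deg (v : V) : nat := #|[set w | e v w]|.

Definition walk_of_len (k : nat) (u v : V) : bool :=
  [exists p : k.-tuple V, path e u p && (last u p == v)].

(* distance = least k admitting a walk of length k (a shortest walk is a
   shortest path; in a connected graph it has length < #|V|) *)
Definition dist (u v : V) : nat :=
  find (fun k => walk_of_len k u v) (iota 0 #|V|).

(* Wiener index: sum over unordered pairs = half of the ordered double sum *)
Definition wiener : nat := (\sum_(u : V) \sum_(v : V) dist u v) %/ 2.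

End Graphs.

(* Vertices of V_s(T): original vertices, two subdivision vertices per edge
   (the vertex of the edge uv adjacent to u is indexed by the ordered pair
   (u,v)), and for each original vertex u the pendant leaves (u,i) with
   deg u <= i < s, i.e. s - deg u leaves. *)
Definition vicsek_vertex (T : finType) (e : rel T) (s : nat) : finType :=
  (T + ({p : T * T | e p.1 p.2} + {q : T * 'I_s | deg e q.1 <= q.2}))%type.

Definition vicsek_rel (T : finType) (e : rel T) (s : nat) :
    rel (vicsek_vertex e s) :=
  fun x y =>
  match x, y with
  | inl u, inr (inl p) => u == (val p).1
  | inr (inl p), inl u => u == (val p).1
  | inr (inl p), inr (inl q) => (val q == ((val p).2, (val p).1))
  | inl u, inr (inr q) => u == (val q).1
  | inr (inr q), inl u => u == (val q).1
  | _, _ => false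
  end.

Arguments vicsek_vertex {T} e s.
Arguments vicsek_rel {T} e s _ _.

(* Let tr z, the transmission of z, be the sum of the distances from z, so
   that twice the Wiener index is the sum of all transmissions.  Seen from an
   original vertex u of V_s(T), an original vertex v lies at distance
   3 d(u,v), a leaf attached at a at distance 3 d(u,a) + 1, and the vertex
   inserted next to x on the edge xy at distance min (3 d(u,x) + 1,
   3 d(u,y) + 2): these values form a breadth-first labelling from u, hence
   are the distances, and tr u = 3 (s + 1) tr_T u + #leaves.  A leaf l at a
   satisfies tr l + 2 = |V_s(T)| + tr a.  The inserted vertices a, b of the
   path x-a-b-y satisfy tr a + tr b + 4 = tr x + tr y, because every other
   vertex is three steps closer to one of x, y than to the other: the edge xy
   of T leaves every other edge entirely on one of its two sides.  Summing
   these identities leaves only the transmissions in T, the degree sum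
   2 (n - 1) of T and the number (s - 2) n + 2 of leaves. *)

From mathcomp Require Import all_boot zify.
Set Implicit Arguments. Unset Strict Implicit. Unset Printing Implicit Defensive.

Lemma sum_indicator (V : finType) (t : V) : \sum_(z : V) (z == t : nat) = 1.
Proof. by rewrite (bigD1 t) //= eqxx big1 // => z /negbTE->. Qed.

Lemma sum_symmetric_double (V : finType) (F : V -> V -> nat) :
  (forall u v, F u v = F v u) -> (forall u, F u u = 0) ->
  \sum_u \sum_v F u v = 2 * \sum_u \sum_(v | enum_rank u < enum_rank v) F u v.
Proof.
move=> Fsym F0; pose lt (u v : V) := enum_rank u < enum_rank v.
have split_uv u v : F u v = (lt u v) * F u v + (lt v u) * F v u.
  rewrite /lt (Fsym v u).
  by case: ltngtP => [||/val_inj/enum_rank_inj->]; rewrite ?F0 /=; lia.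
rewrite (eq_bigr _ (fun u _ => eq_bigr _ (fun v _ => split_uv u v))).
rewrite (eq_bigr _ (fun u _ => big_split _ _ _ _ _)) big_split /=.
rewrite [X in _ + X]exchange_big.
rewrite addnn -mul2n; congr (2 * _); apply: eq_bigr => u _; rewrite [RHS]big_mkcond.
by apply: eq_bigr => v _; rewrite /lt; case: (_ < _); rewrite ?mul1n.
Qed.

Lemma sum_sig (X : finType) (P : pred X) (F : X -> nat) :
  \sum_(q : {x | P x}) F (val q) = \sum_(x | P x) F x.
Proof.
symmetry; rewrite (reindex_omap (val : {x | P x} -> X) insub) => [|x Px].
  by apply: eq_bigl => -[x Px] /=; rewrite Px insubT /= eqxx.
by rewrite insubT.
Qed.

Lemma sum_sig_ord_geq (X : finType) (f : X -> nat) n (G : X -> nat) :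
  \sum_(q : {q : X * 'I_n | f q.1 <= q.2}) G (val q).1 = \sum_x (n - f x) * G x.
Proof.
rewrite (sum_sig (fun q : X * 'I_n => f q.1 <= q.2) (fun q => G q.1)).
rewrite -(pair_big_dep xpredT (fun x (i : 'I_n) => f x <= i) (fun x _ => G x)).
apply: eq_bigr => x _; rewrite sum_nat_cond_const; congr (_ * _).
rewrite -sum1_card -[RHS]muln1 -sum_nat_const_nat big_geq_mkord.
by apply: eq_bigl => i; rewrite inE.
Qed.

Section Distance.
Variables (V : finType) (e : rel V).
Implicit Types (u v w x y z : V) (k : nat).

Definition transmission u : nat := \sum_v dist e u v.

Lemma walk_of_lenP k u v :
  reflect (exists p : seq V, [/\ size p = k, path e u p & last u p = v])
          (walk_of_len e k u v).
Proof.
apply: (iffP existsP) => [[p /andP[pP /eqP pL]] | [p [pS pP pL]]].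
  by exists (val p); rewrite size_tuple.
have pS' : size p == k by rewrite pS.
by exists (Tuple pS'); rewrite /= pP pL eqxx.
Qed.

Lemma walk_of_len0 u : walk_of_len e 0 u u.
Proof. by apply/walk_of_lenP; exists [::]. Qed.

Lemma walk_of_len_rcons k u v w :
  walk_of_len e k u v -> e v w -> walk_of_len e k.+1 u w.
Proof.
case/walk_of_lenP=> p [pS pP pL] evw; apply/walk_of_lenP.
by exists (rcons p w); rewrite size_rcons rcons_path last_rcons pS pP pL evw.
Qed.

Lemma walk_of_len_cons k u v w :
  e u v -> walk_of_len e k v w -> walk_of_len e k.+1 u w.
Proof.
move=> euv /walk_of_lenP[p [pS pP pL]]; apply/walk_of_lenP.
by exists (v :: p); rewrite /= euv pS pP pL.
Qed.

Lemma walk_of_len_connect k u v : walk_of_len e k u v -> connect e u v.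
Proof. by case/walk_of_lenP=> p [_ pP pL]; apply/connectP; exists p. Qed.

Lemma dist_le k u v : walk_of_len e k u v -> dist e u v <= k.
Proof.
move=> uv; rewrite /dist; have [kV|] := ltnP k #|V|.
  rewrite leqNgt; apply/negP => /(before_find 0).
  by rewrite nth_iota // add0n uv.
by apply: leq_trans; rewrite -[X in _ <= X](size_iota 0) find_size.
Qed.

(* A walk can be shortened to a path, which has fewer than [#|V|] edges, so
   [find] sees it within [iota 0 #|V|]. *)
Lemma dist_walk k u v : walk_of_len e k u v -> walk_of_len e (dist e u v) u v.
Proof.
case/walk_of_lenP=> p [_ pP pL].
case: (shortenP pP) pL => q qP qU _ qL.
have qV : size q < #|V|.
  by move/card_uniqP: qU => /= qC; have := max_card (mem (u :: q)); rewrite qC.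
have has_walk : has (fun j => walk_of_len e j u v) (iota 0 #|V|).
  by apply/hasP; exists (size q); rewrite ?mem_iota //; apply/walk_of_lenP; exists q.
have := nth_find 0 has_walk; rewrite has_find size_iota in has_walk.
by rewrite /dist nth_iota.
Qed.

Lemma dist_self u : dist e u u = 0.
Proof. by apply/eqP; rewrite -leqn0 dist_le ?walk_of_len0. Qed.

Lemma dist_adj u v : e u v -> u != v -> dist e u v = 1.
Proof.
move=> euv uv; have uv1 : walk_of_len e 1 u v.
  by apply/walk_of_lenP; exists [:: v]; rewrite /= euv.
have := dist_le uv1; have := dist_walk uv1.
case: (dist e u v) => [|[|//]] //.
by case/walk_of_lenP=> p [/size0nil -> _ /= vu]; rewrite vu eqxx in uv.
Qed.

Definition bfs_labelling u (g : V -> nat) :=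
  [/\ forall v, (g v == 0) = (v == u),
      forall x y, e x y -> g y <= (g x).+1 &
      forall v, 0 < g v -> exists2 w, e w v & (g w).+1 = g v].

Section Labelling.
Variables (u : V) (g : V -> nat).
Hypothesis gB : bfs_labelling u g.

Lemma bfs_labelling_walk v : walk_of_len e (g v) u v.
Proof.
case: gB => g0 _ gPred; move gv: (g v) => k; elim: k v gv => [|k IHk] v gv.
  by move/eqP: gv; rewrite g0 => /eqP->; apply: walk_of_len0.
have [w ewv gw] := gPred v (ltac:(by rewrite gv)).
by apply: walk_of_len_rcons ewv; apply: IHk; lia.
Qed.

Lemma bfs_labelling_le k v : walk_of_len e k u v -> g v <= k.
Proof.
case: gB => g0 gLip _ /walk_of_lenP[p [<- pP <-]].
have gu : g u = 0 by apply/eqP; rewrite g0.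
suff walk_bound q x : path e x q -> g (last x q) <= g x + size q.
  by rewrite -[size p]add0n -gu walk_bound.
elim: q x => [|y q IHq] x /=; first by rewrite addn0.
by case/andP=> exy /IHq; have := gLip _ _ exy; lia.
Qed.

Lemma dist_bfs_labelling : dist e u =1 g.
Proof.
move=> v; apply/eqP; rewrite eqn_leq dist_le ?bfs_labelling_walk //=.
exact/bfs_labelling_le/dist_walk/bfs_labelling_walk.
Qed.

End Labelling.

Section Connected.
Hypothesis eC : connected_graph e.

Lemma connected_walk u v : walk_of_len e (dist e u v) u v.
Proof.
have /connectP[p pP pL] := eC u v.
by apply: (@dist_walk (size p)); apply/walk_of_lenP; exists p.
Qed.

Lemma dist_eq0 u v : (dist e u v == 0) = (v == u).
Proof.
apply/eqP/eqP => [|->]; last exact: dist_self.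
move=> uv0; have := connected_walk u v; rewrite uv0.
by case/walk_of_lenP=> p [/size0nil-> _ <-].
Qed.

Lemma dist_lipschitz u x y : e x y -> dist e u y <= (dist e u x).+1.
Proof. by move=> exy; apply/dist_le/walk_of_len_rcons/exy/connected_walk. Qed.

Lemma dist_lower_neighbour u v :
  v != u -> exists2 w, e w v & (dist e u w).+1 = dist e u v.
Proof.
move=> vu; have /walk_of_lenP[p [pS pP pL]] := connected_walk u v.
case/lastP: p pS pP pL => [_ _ /= uv|p w]; first by rewrite uv eqxx in vu.
rewrite size_rcons rcons_path last_rcons => pS /andP[pP ewv] wv; subst w.
exists (last u p) => //; apply/eqP; rewrite eqn_leq dist_lipschitz // andbT -pS ltnS.
by apply: dist_le; apply/walk_of_lenP; exists p.
Qed.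

Lemma dist_adj_le t w z : e t w -> dist e t z <= (dist e w z).+1.
Proof. by move=> etw; apply/dist_le/walk_of_len_cons/connected_walk. Qed.

Lemma dist_first_step t z : z != t -> exists2 w, e t w & dist e t z = (dist e w z).+1.
Proof.
move=> zt; have /walk_of_lenP[[|w p] [pS pP pL]] := connected_walk t z.
  by rewrite -pL eqxx in zt.
case/andP: pP => etw pP; exists w => //; apply/eqP.
rewrite eqn_leq dist_adj_le //= -pS ltnS.
by apply: dist_le; apply/walk_of_lenP; exists p.
Qed.

Lemma dist_pendant l a z :
  (forall w, e l w = (w == a)) -> z != l -> dist e l z = (dist e a z).+1.
Proof. by move=> lN /dist_first_step[w]; rewrite lN => /eqP->. Qed.

Lemma dist_subdivision t t' x y z :
  (forall w, e t w = (w == x) || (w == t')) ->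
  (forall w, e t' w = (w == y) || (w == t)) ->
  z != t -> z != t' -> dist e t z = minn (dist e x z).+1 (dist e y z).+2.
Proof.
move=> tN t'N zt zt'.
have tx : dist e t z <= (dist e x z).+1 by apply: dist_adj_le; rewrite tN eqxx.
have tt' : dist e t z <= (dist e t' z).+1 by apply: dist_adj_le; rewrite tN eqxx orbT.
have t'y : dist e t' z <= (dist e y z).+1 by apply: dist_adj_le; rewrite t'N eqxx.
have [w + tw] := dist_first_step zt; rewrite tN => /orP[/eqP|/eqP] ?; subst w.
  lia.
have [w + t'w] := dist_first_step zt'; rewrite t'N => /orP[/eqP|/eqP] ?; subst w.
  lia.
lia.
Qed.

End Connected.

Section Symmetric.
Hypothesis eS : symmetric e.

Lemma walk_of_len_sym k u v : walk_of_len e k u v = walk_of_len e k v u.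
Proof.
suff walk_rev x y : walk_of_len e k x y -> walk_of_len e k y x.
  by apply/idP/idP; apply: walk_rev.
case/walk_of_lenP=> p [pS pP pL]; apply/walk_of_lenP.
exists (rev (belast x p)); rewrite size_rev size_belast -pL rev_path.
split=> //; first by apply: sub_path pP => a b; rewrite eS.
by case/lastP: p {pS pP pL} => //= p a; rewrite belast_rcons rev_cons last_rcons.
Qed.

Lemma dist_sym u v : dist e u v = dist e v u.
Proof. by apply: eq_find => k; rewrite walk_of_len_sym. Qed.

Lemma sum_transmission_wiener : \sum_u transmission u = 2 * wiener e.
Proof.
rewrite /wiener -/(\sum_u transmission u).
rewrite (sum_symmetric_double (F := dist e)) ?mulKn // => [u v|u].
  exact: dist_sym.
exact: dist_self.
Qed.

End Symmetric.

End Distance.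

Section Arcs.
Variables (V : finType) (e : rel V).
Hypothesis eS : symmetric e.
Local Notation arc := {p : V * V | e p.1 p.2}.

Lemma sum_arc (G : V -> V -> nat) :
  \sum_(p : arc) G (val p).1 (val p).2 = \sum_x \sum_(y | e x y) G x y.
Proof.
by rewrite (sum_sig (fun p : V * V => e p.1 p.2) (fun p => G p.1 p.2)) pair_big_dep.
Qed.

Lemma sum_arc_tail (G : V -> nat) : \sum_(p : arc) G (val p).1 = \sum_x deg e x * G x.
Proof.
rewrite (sum_arc (fun x _ => G x)); apply: eq_bigr => x _.
exact: sum_nat_cond_const.
Qed.

Definition arc_rev (p : arc) : arc :=
  exist (fun p : V * V => e p.1 p.2) ((val p).2, (val p).1) (etrans (eS _ _) (valP p)).

Lemma arc_revK : involutive arc_rev.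
Proof. by move=> p; apply: val_inj; case: p => -[]. Qed.

(* Both sides are half of a sum over the pairs of opposite arcs. *)
Lemma sum_arc_rev_pair (F G : arc -> nat) :
  (forall p, F p + F (arc_rev p) = G p + G (arc_rev p)) -> \sum_p F p = \sum_p G p.
Proof.
move=> FG; have sum_rev H : \sum_p H (arc_rev p) = \sum_p H p.
  by rewrite [RHS](reindex_inj (inv_inj arc_revK)).
have : \sum_p (F p + F (arc_rev p)) = \sum_p (G p + G (arc_rev p)) by apply: eq_bigr.
by rewrite !big_split /= !sum_rev !addnn => /double_inj.
Qed.

End Arcs.

Section Tree.
Variables (T : finType) (e : rel T).
Hypothesis eT : is_tree e.
Local Notation d := (dist e).

Lemma tree_sym : symmetric e. Proof. by case: eT => -[]. Qed.
Lemma tree_irrefl : irreflexive e. Proof. by case: eT => -[]. Qed.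
Lemma tree_connected : connected_graph e. Proof. by case: eT. Qed.

Lemma tree_neq x y : e x y -> x != y.
Proof. by apply: contraTneq => ->; rewrite tree_irrefl. Qed.

(* Induction on the level [L]: the neighbours of [a] and [b] one level down
   either coincide, closing a cycle, or form a smaller instance. *)
Lemma no_path_above_level u L a b c :
  d u a = L -> d u b = L -> a != b -> path e a (rcons c b) -> uniq c ->
  (forall x, x \in c -> L < d u x) -> False.
Proof.
have eC := tree_connected; elim: L a b c => [|L IHL] a b c ua ub ab abP cU cL.
  have a_u : a = u by apply/eqP; rewrite -(dist_eq0 eC) ?ua.
  have b_u : b = u by apply/eqP; rewrite -(dist_eq0 eC) ?ub.
  by rewrite a_u b_u eqxx in ab.
have [pa epa pau] : exists2 pa, e pa a & (d u pa).+1 = d u a.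
  by apply: dist_lower_neighbour; rewrite // -(dist_eq0 eC) ua.
have [pb epb pbu] : exists2 pb, e pb b & (d u pb).+1 = d u b.
  by apply: dist_lower_neighbour; rewrite // -(dist_eq0 eC) ub.
have abL x : x \in a :: rcons c b -> L.+1 <= d u x.
  by rewrite inE mem_rcons inE => /or3P[/eqP->|/eqP->|/cL]; lia.
have abU : uniq (a :: rcons c b).
  rewrite /= mem_rcons inE negb_or ab rcons_uniq cU andbT /=.
  by apply/andP; split; apply/negP => /cL; lia.
have abpP : path e pa (rcons (a :: rcons c b) pb).
  by rewrite rcons_cons /= rcons_path last_rcons abP epa tree_sym epb.
case: (eqVneq pa pb) => [papb|]; last first.
  by move=> papb; apply: (IHL pa pb (a :: rcons c b)) => //; lia.
subst pb; have cyc : ucycle e (pa :: a :: rcons c b).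
  apply/andP; split; first exact: abpP.
  by rewrite cons_uniq abU andbT; apply/negP => /abL; lia.
by case: eT => _ _ /(_ _ cyc); rewrite /= size_rcons.
Qed.

Lemma tree_lower_neighbour_uniq u v w1 w2 :
  e w1 v -> e w2 v -> d u w1 <= d u v -> d u w2 <= d u v -> w1 = w2.
Proof.
move=> ew1 ew2 w1v w2v; apply/eqP/negPn/negP => w12.
have vw1 := dist_lipschitz tree_connected u ew1.
have vw2 := dist_lipschitz tree_connected u ew2.
have [w1L|w1v'] := eqVneq (d u w1) (d u v).
  by apply: (no_path_above_level (c := [::]) w1L erefl (tree_neq ew1)); rewrite /= ?ew1.
have [w2L|w2v'] := eqVneq (d u w2) (d u v).
  by apply: (no_path_above_level (c := [::]) w2L erefl (tree_neq ew2)); rewrite /= ?ew2.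
apply: (@no_path_above_level u (d u v).-1 w1 w2 [:: v]) => //; try lia.
  by rewrite /= ew1 tree_sym ew2.
by move=> x; rewrite inE => /eqP->; lia.
Qed.

Lemma tree_dist_adj u x y : e x y -> d u y = (d u x).+1 \/ d u x = (d u y).+1.
Proof.
move=> exy; have eyx : e y x by rewrite tree_sym.
have := dist_lipschitz tree_connected u exy.
have := dist_lipschitz tree_connected u eyx.
have [xy _ _|] := eqVneq (d u x) (d u y); last lia.
by case: (no_path_above_level (c := [::]) xy erefl (tree_neq exy)); rewrite /= ?exy.
Qed.

Lemma sum_lower_neighbours u x : \sum_(y | e x y) (d u x == (d u y).+1) = (x != u).
Proof.
have [->|xu] := eqVneq x u; first by rewrite big1 // => y _; rewrite dist_self.
have [w ewx wx] := dist_lower_neighbour tree_connected xu.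
have exw : e x w by rewrite tree_sym.
rewrite (bigD1 w) //= -wx eqxx big1 // => y /andP[exy yw].
apply/eqP; rewrite eqb0; apply/eqP => xy; move/eqP: yw; apply.
apply: (tree_lower_neighbour_uniq (u := u) (v := x)); rewrite 1?tree_sym //; lia.
Qed.

Lemma tree_sum_deg : \sum_x deg e x = 2 * #|T|.-1.
Proof.
have [u _|T0] := pickP (@predT T); last first.
  by rewrite (eq_card0 T0) big1 // => x; have := T0 x.
(* Of the two orientations of an edge exactly one points towards [u], and
   every vertex but [u] has exactly one neighbour closer to [u]. *)
pose down (p : {p : T * T | e p.1 p.2}) := d u (val p).1 == (d u (val p).2).+1.
have arcs_down : \sum_(p : {p : T * T | e p.1 p.2}) 1 = \sum_p 2 * down p.
  apply: (sum_arc_rev_pair (eS := tree_sym)) => -[[x y] exy].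
  by rewrite /down /= in exy *; case: (tree_dist_adj u exy) => ->; lia.
rewrite (eq_bigr (fun x => deg e x * 1)) => [|x _]; last by rewrite muln1.
rewrite -sum_arc_tail arcs_down (sum_arc e (fun x y => 2 * (d u x == (d u y).+1))).
rewrite (eq_bigr (fun x => 2 * (x != u))) => [|x _]; last first.
  by rewrite -big_distrr sum_lower_neighbours.
rewrite -big_distrr (bigD1 u) //= eqxx add0n -(cardC1 u) -sum1_card.
by congr (2 * _); apply: eq_big => // x /negbTE->.
Qed.

Lemma tree_side_rec x y w p : e x y -> w != x -> e p w -> (d x p).+1 = d x w ->
  (d y w < d x w) = (w == y) || (d y p < d x p).
Proof.
move=> exy wx epw pw; have eC := tree_connected.
have xy1 : d x y = 1 := dist_adj exy (tree_neq exy).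
apply/idP/orP => [yw|[/eqP->|yp]]; last 2 first.
- by rewrite dist_self xy1.
- by have := dist_lipschitz eC y epw; lia.
have [_|wy] := eqVneq w y; first by left.
right; have xw := dist_adj_le eC w exy.
have [r erw rw] := dist_lower_neighbour eC wy.
have xr := dist_adj_le eC r exy.
have rp : r = p by apply: (tree_lower_neighbour_uniq (u := x) (v := w)) => //; lia.
by subst r; lia.
Qed.

(* [d y a < d x a] says that [a] lies on the [y] side of the edge [xy]. *)
Lemma tree_same_side x y a b : e x y -> e a b -> (a, b) != (x, y) -> (a, b) != (y, x) ->
  (d y a < d x a) = (d y b < d x b).
Proof.
move=> exy; wlog xab : a b / d x b = (d x a).+1 => [Hwlog eab|].
  case: (tree_dist_adj x eab) => [|xba] abxy abyx; first exact: Hwlog.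
  by symmetry; apply: Hwlog; rewrite // 1?tree_sym // xpair_eqE andbC -xpair_eqE.
move=> eab abxy abyx; have bx : b != x by rewrite -(dist_eq0 tree_connected) xab.
rewrite (tree_side_rec exy bx eab (esym xab)); case: eqVneq => //= by_; subst b.
have ax : a = x.
  by apply: (tree_lower_neighbour_uniq (u := x) (v := y)); rewrite ?dist_self //; lia.
by rewrite ax eqxx in abxy.
Qed.

End Tree.

Lemma vicsek_transmission_arith s n W S D L : 2 <= s -> D = 2 * n.-1 -> D + L = n * s ->
  W + 2 * (D + L) = s.+1 * (3 * s.+1 * S + n * L) + L * (s.+1 * n) ->
  W = 3 * (s + 1) ^ 2 * S + 2 * ((s ^ 2 - s - 2) * n ^ 2 + (s + 2) * n).
Proof.
move=> s2; have [t ->] : exists t, s = t + 2 by exists (s - 2); lia.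
have -> : (t + 2) ^ 2 - (t + 2) - 2 = t * (t + 3) by nia.
case: n => [|m] D2 LD.
  have L0 : L = 0 by lia.
  by rewrite L0; lia.
(* [L] counts the leaves: [s n] slots minus the [2 (n - 1)] taken by edges. *)
have Lm : L = t * m.+1 + 2 by lia.
by rewrite Lm; lia.
Qed.

Section Vicsek.
Variables (s : nat) (T : finType) (e : rel T).
Hypothesis eT : is_tree e.
Hypothesis deg_le : forall v, deg e v <= s.

Local Notation V := (vicsek_vertex e s).
Local Notation E := (vicsek_rel e s).
Local Notation arc := {p : T * T | e p.1 p.2}.
Local Notation pendant := {q : T * 'I_s | deg e q.1 <= q.2}.
Local Notation d := (dist e).
Local Notation d' := (dist E).
Local Notation orig u := (inl u : V).
Local Notation subdiv p := (inr (inl p) : V).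
Local Notation leaf q := (inr (inr q) : V).
Local Notation rev := (arc_rev (tree_sym eT)).

Definition vicsek_orig_dist (u : T) (z : V) : nat :=
  match z with
  | inl v => 3 * d u v
  | inr (inl p) => minn (3 * d u (val p).1).+1 (3 * d u (val p).2).+2
  | inr (inr q) => (3 * d u (val q).1).+1
  end.

Lemma vicsek_orig_dist_bfs u : bfs_labelling E (orig u) (vicsek_orig_dist u).
Proof.
have eC := tree_connected eT; split.
- case=> [v|[p|q]] /=; first by rewrite muln_eq0 /= (dist_eq0 eC).
    by apply/negbTE; lia.
  by apply/negbTE; lia.
- move=> [v|[[[x y] exy]|[[a i] ai]]] [v'|[[[x' y'] exy']|[[a' i'] ai']]] //=.
  + by move/eqP <-; lia.
  + by move/eqP <-; lia.
  + by move/eqP ->; have /= := dist_lipschitz eC u (etrans (tree_sym eT _ _) exy); lia.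
  + by case/eqP => -> ->; lia.
  + by move/eqP ->; lia.
- move=> [v|[[[x y] exy]|[[a i] ai]]] /= uv.
  + have vu : v != u by rewrite -(dist_eq0 eC) -lt0n; lia.
    have [w ewv wv] := dist_lower_neighbour eC vu.
    have evw : e v w by rewrite tree_sym.
    by exists (subdiv (Sub (v, w) evw)); rewrite /= ?eqxx //; lia.
  + have [xy|yx] := leqP (d u x) (d u y).
      by exists (orig x); rewrite /= ?eqxx //; lia.
    have eyx : e y x by rewrite tree_sym.
    exists (subdiv (Sub (y, x) eyx)); rewrite /= ?eqxx //.
    by have := dist_lipschitz eC u exy; lia.
  + by exists (orig a); rewrite /= ?eqxx.
Qed.

Lemma vicsek_dist_orig u z : d' (orig u) z = vicsek_orig_dist u z.
Proof. exact: dist_bfs_labelling (vicsek_orig_dist_bfs u) z. Qed.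

Lemma vicsek_sym : symmetric E.
Proof.
case=> [u|[[[x y] exy]|q]] [v|[[[x' y'] exy']|q']] //=.
by rewrite !xpair_eqE [RHS]andbC (eq_sym x) (eq_sym y).
Qed.

Lemma vicsek_connected : connected_graph E.
Proof.
have reach u z : connect E (orig u) z.
  exact: walk_of_len_connect (bfs_labelling_walk (vicsek_orig_dist_bfs u) z).
move=> z w; have [u _] : exists u : T, true.
  by case: z => [u|[p|q]]; [exists u | exists (val p).1 | exists (val q).1].
by apply: connect_trans (reach u w); rewrite (sym_connect_sym vicsek_sym) reach.
Qed.

Lemma vicsek_leaf_adj q w : E (leaf q) w = (w == orig (val q).1).
Proof. by case: w => [u|[p|q']]. Qed.

Lemma vicsek_subdiv_adj p w :
  E (subdiv p) w = (w == orig (val p).1) || (w == subdiv (rev p)).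
Proof. by case: w => [u|[p'|q']] //=; rewrite orbF. Qed.

Lemma vicsek_dist_leaf q z : z != leaf q -> d' (leaf q) z = (d' (orig (val q).1) z).+1.
Proof. exact/(dist_pendant vicsek_connected)/vicsek_leaf_adj. Qed.

Lemma vicsek_dist_subdiv p z : z != subdiv p -> z != subdiv (rev p) ->
  d' (subdiv p) z = minn (d' (orig (val p).1) z).+1 (d' (orig (val p).2) z).+2.
Proof.
apply: (dist_subdivision vicsek_connected) => w; first exact: vicsek_subdiv_adj.
by rewrite vicsek_subdiv_adj arc_revK.
Qed.

Lemma vicsek_orig_dist_arc p z : z != subdiv p -> z != subdiv (rev p) ->
  vicsek_orig_dist (val p).1 z = vicsek_orig_dist (val p).2 z + 3 \/
  vicsek_orig_dist (val p).2 z = vicsek_orig_dist (val p).1 z + 3.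
Proof.
case: p => -[x y] /= exy; have dS := dist_sym (tree_sym eT).
have edge w : d x w = (d y w).+1 \/ d y w = (d x w).+1.
  by rewrite !(dS _ w); case: (tree_dist_adj eT w exy); [right | left].
case: z => [w|[[[a b] eab]|[[a i] ai]]] /= zp zrp.
- by case: (edge w); lia.
- move: (tree_same_side eT exy eab zp zrp) => /=.
  by case: (edge a); case: (edge b); lia.
- by case: (edge a); lia.
Qed.

Lemma vicsek_dist_orig_subdiv p :
  d' (orig (val p).1) (subdiv p) = 1 /\ d' (orig (val p).2) (subdiv p) = 2.
Proof.
rewrite !vicsek_dist_orig; case: p => -[x y] exy /=.
by rewrite !dist_self (dist_sym (tree_sym eT) y) (dist_adj exy (tree_neq eT exy)).
Qed.

Lemma vicsek_subdiv_rev_neq p : subdiv p != subdiv (rev p).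
Proof.
case: p => -[x y] exy; apply/eqP => -[xy _].
by move: exy; rewrite xy tree_irrefl.
Qed.

Lemma vicsek_transmission_subdiv p :
  transmission E (subdiv p) + transmission E (subdiv (rev p)) + 4 =
  transmission E (orig (val p).1) + transmission E (orig (val p).2).
Proof.
have ends (t1 t2 : V) : \sum_z ((z == t1) + (z == t2)) * 2 = 4.
  by rewrite -big_distrl big_split !sum_indicator.
rewrite /transmission -(ends (subdiv p) (subdiv (rev p))) -!big_split.
apply: eq_bigr => z _; have p_rp := vicsek_subdiv_rev_neq p.
have d_p_rp : d' (subdiv p) (subdiv (rev p)) = 1.
  by apply: dist_adj p_rp; rewrite vicsek_subdiv_adj eqxx orbT.
have [x_p y_p] := vicsek_dist_orig_subdiv p.
have [y_rp x_rp] := vicsek_dist_orig_subdiv (rev p).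
have [->|zp] := eqVneq z (subdiv p); last have [->|zp'] := eqVneq z (subdiv (rev p)).
- by rewrite dist_self (dist_sym vicsek_sym) d_p_rp (negbTE p_rp) x_p y_p.
- by rewrite dist_self d_p_rp x_rp y_rp.
have zp'' : z != subdiv (rev (rev p)) by rewrite arc_revK; apply: zp.
rewrite (vicsek_dist_subdiv zp zp') (vicsek_dist_subdiv zp' zp'') !vicsek_dist_orig.
by case: (vicsek_orig_dist_arc zp zp') => /=; lia.
Qed.

Lemma vicsek_transmission_leaf q :
  transmission E (leaf q) + 2 = #|V| + transmission E (orig (val q).1).
Proof.
have end_ (t : V) : \sum_z (z == t) * 2 = 2 by rewrite -big_distrl sum_indicator.
have card1 : \sum_(z : V) 1 = #|V| by rewrite sum1_card.
rewrite /transmission -{1}(end_ (leaf q)) -card1 -!big_split; apply: eq_bigr => z _ /=.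
have [->|zq] := eqVneq z (leaf q).
  by rewrite dist_self vicsek_dist_orig /= dist_self.
by rewrite (vicsek_dist_leaf zq) mul0n addn0 add1n.
Qed.

Lemma sum_vicsek_orig_dist_subdiv u :
  \sum_(p : arc) vicsek_orig_dist u (subdiv p) = \sum_x deg e x * (3 * d u x).
Proof.
rewrite -sum_arc_tail; apply: (sum_arc_rev_pair (eS := tree_sym eT)) => -[[x y] exy].
by rewrite /= in exy *; case: (tree_dist_adj eT u exy) => ->; lia.
Qed.

Lemma sum_vicsek (F : V -> nat) : \sum_z F z =
  \sum_u F (orig u) + \sum_(p : arc) F (subdiv p) + \sum_(q : pendant) F (leaf q).
Proof. by rewrite big_sumType /= big_sumType addnA. Qed.

Lemma vicsek_transmission_orig u :
  transmission E (orig u) = 3 * s.+1 * transmission e u + \sum_a (s - deg e a).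
Proof.
rewrite /transmission (eq_bigr _ (fun z _ => vicsek_dist_orig u z)) sum_vicsek.
rewrite sum_vicsek_orig_dist_subdiv (sum_sig_ord_geq _ _ (fun a => (3 * d u a).+1)).
rewrite big_distrr -!big_split; apply: eq_bigr => a _ /=.
by have := deg_le a; nia.
Qed.

Lemma card_vicsek : #|V| = s.+1 * #|T|.
Proof.
have card1 (X : finType) : #|X| = \sum_(x : X) 1 by rewrite sum1_card.
rewrite card1 sum_vicsek (sum_arc_tail e (fun=> 1)) (sum_sig_ord_geq _ _ (fun=> 1)).
rewrite (card1 T) big_distrr -!big_split; apply: eq_bigr => x _ /=.
by have := deg_le x; lia.
Qed.

Lemma sum_transmission_vicsek_orig :
  \sum_z transmission E z + 2 * (\sum_x deg e x + \sum_a (s - deg e a)) =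
  s.+1 * \sum_u transmission E (orig u) + (\sum_a (s - deg e a)) * #|V|.
Proof.
rewrite sum_vicsek; set A := \sum_u _.
set B := \sum_(p : arc) _; set C := \sum_(q : pendant) _.
set D := \sum_x deg e x; set L := \sum_a (s - deg e a); set N := #|V|.
have subdivs : B + D * 2 = \sum_x deg e x * transmission E (orig x).
  rewrite /B /D big_distrl -!sum_arc_tail -big_split.
  apply: (sum_arc_rev_pair (eS := tree_sym eT)) => p /=.
  by have /= := vicsek_transmission_subdiv p; lia.
have leaves : C + L * 2 = L * N + \sum_a (s - deg e a) * transmission E (orig a).
  transitivity (\sum_a (s - deg e a) * (N + transmission E (orig a))).
    rewrite /C /L big_distrl -!sum_sig_ord_geq -big_split; apply: eq_bigr => q _.
    exact: vicsek_transmission_leaf.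
  by rewrite /L big_distrl -big_split; apply: eq_bigr => a _; rewrite mulnDr.
have degs : \sum_x deg e x * transmission E (orig x)
    + \sum_a (s - deg e a) * transmission E (orig a) = s * A.
  rewrite /A -big_split big_distrr; apply: eq_bigr => a _ /=.
  by rewrite -mulnDl subnKC.
lia.
Qed.

Lemma sum_transmission_vicsek : 2 <= s ->
  \sum_z transmission E z = 3 * (s + 1) ^ 2 * \sum_u transmission e u
    + 2 * ((s ^ 2 - s - 2) * #|T| ^ 2 + (s + 2) * #|T|).
Proof.
move=> s2; have LD : \sum_x deg e x + \sum_a (s - deg e a) = #|T| * s.
  by rewrite -big_split -sum_nat_const; apply: eq_bigr => a _ /=; rewrite subnKC.
apply: (vicsek_transmission_arith s2 (tree_sum_deg eT) LD).
have := sum_transmission_vicsek_orig; rewrite card_vicsek.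
rewrite (eq_bigr _ (fun u _ => vicsek_transmission_orig u)) big_split.
by rewrite -big_distrr sum_nat_const; apply.
Qed.

End Vicsek.

Theorem theorem2 (s : nat) (T : finType) (e : rel T) :
  2 <= s -> is_tree e -> (forall v : T, deg e v <= s) ->
  wiener (vicsek_rel e s) =
    3 * (s + 1) ^ 2 * wiener e + (s ^ 2 - s - 2) * #|T| ^ 2 + (s + 2) * #|T|.
Proof.
move=> s2 eT deg_le; rewrite [wiener (vicsek_rel e s)]/wiener.
rewrite -/(\sum_z transmission (vicsek_rel e s) z).
rewrite (sum_transmission_vicsek eT deg_le s2).
by rewrite (sum_transmission_wiener (tree_sym eT)) mulnCA -mulnDr mulKn // addnA.
Qed.
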